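(* Let $v$ be a vertex of degree at least $4$ in a graph $G$, and let $va, vb$ be two distinct edges incident with $v$ where $a\ne b$. Let $G_{[v,ab]}=G-v+ab$ be the graph obtained by deleting $v$ and adding a new edge $ab$. If $G_{[v,ab]}\in\mathcal{S}_3$, then $G\in\mathcal{S}_3$.
   Context: Graphs may have parallel edges but no loops. $G\in\mathcal{S}_3$ means: for every $\beta:V(G)\to\mathbb{Z}_3$ with $\sum_v\beta(v)\equiv0\pmod3$ there is a strongly-connected orientation $D$ of $G$ with $d^+_D(v)-d^-_D(v)\equiv\beta(v)\pmod3$ for all $v$. *)

(* Multigraphs (parallel edges allowed, no loops) given by
   a finite vertex type V, a finite edge type E, and endpoint maps. *)
From HB Require Import structures.
From mathcomp Require Import all_boot all_order all_algebra.
Set Implicit Arguments. Unset Strict Implicit. Unset Printing Implicit Defensive.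
Import GRing.Theory.
Local Open Scope ring_scope.

Section Graphs.
Variables (V E : finType) (src tgt : E -> V).

Definition loopless := forall e, src e != tgt e.

Definition otail (D : E -> bool) e := if D e then src e else tgt e.
Definition ohead (D : E -> bool) e := if D e then tgt e else src e.

Definition arc (D : E -> bool) : rel V :=
  [rel x y | [exists e, (otail D e == x) && (ohead D e == y)]].

Definition strongly_connected (D : E -> bool) :=
  forall x y : V, connect (arc D) x y.

Definition outdeg (D : E -> bool) (x : V) := #|[set e | otail D e == x]|.
Definition indeg (D : E -> bool) (x : V) := #|[set e | ohead D e == x]|.

Definition S3 :=
  forall beta : V -> 'Z_3, \sum_(x : V) beta x = 0 ->
    exists D : E -> bool, strongly_connected D /\
      forall x, (outdeg D x)%:R - (indeg D x)%:R = beta x.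

Definition degree (x : V) := #|[set e | (src e == x) || (tgt e == x)]|.

Definition joins (e : E) (x y : V) :=
  ((src e == x) && (tgt e == y)) || ((src e == y) && (tgt e == x)).
End Graphs.

(* The graph G - v + ab : vertices V \ {v}; edges = edges of G not incident
   with v, plus one new edge (None) joining a and b. *)
Definition sV (V : finType) (v : V) := {x : V | x != v}.
Definition sE (V E : finType) (src tgt : E -> V) (v : V) :=
  option {e : E | (src e != v) && (tgt e != v)}.

(* the default (a) of insubd is never used, since the endpoints differ from v *)
Definition ssrc (V E : finType) (src tgt : E -> V) (v a b : V)
  (hav : a != v) (hbv : b != v) (e : sE src tgt v) : sV v :=
  match e with
  | Some e' => insubd (exist _ a hav : sV v) (src (val e'))
  | None => exist _ a hav end.
Definition stgt (V E : finType) (src tgt : E -> V) (v a b : V)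
  (hav : a != v) (hbv : b != v) (e : sE src tgt v) : sV v :=
  match e with
  | Some e' => insubd (exist _ a hav : sV v) (tgt (val e'))
  | None => exist _ b hbv end.
Arguments ssrc : clear implicits.
Arguments stgt : clear implicits.

From Pilot Require Import Defs.
From mathcomp Require Import all_boot all_order all_algebra zify ring.
Set Implicit Arguments. Unset Strict Implicit. Unset Printing Implicit Defensive.
Import GRing.Theory.
Local Open Scope ring_scope.

(* Given [beta], orient the edges at [v] other than [va] and [vb] so that they
   alone realise [beta v]: there are at least two of them, and two signs +-1
   already reach every residue mod 3.  Subtracting their contribution leaves a
   zero-sum boundary on G - v + ab, realised by a strongly connected
   orientation.  Splitting its new arc a -> b into a -> v -> b changes no
   boundary value, and every vertex still reaches v and is reached from it. *)

Lemma sum_sig (R : nmodType) (I : finType) (P : pred I) (F : I -> R) :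
  \sum_(i | P i) F i = \sum_(x : {x | P x}) F (val x).
Proof.
rewrite (reindex_omap (val : {x | P x} -> I) insub) => [|i Pi]; last first.
  by rewrite insubT.
by apply: eq_bigl => -[i Pi] /=; rewrite insubT ?Pi /= eqxx.
Qed.

Lemma sum_option (R : nmodType) (T : finType) (F : option T -> R) :
  \sum_(o : option T) F o = F None + \sum_(t : T) F (Some t).
Proof.
rewrite (bigD1 None) //=; congr (_ + _).
rewrite (reindex_omap (Some : T -> option T) id) => [|[]//].
by apply: eq_bigl => t; rewrite eqxx.
Qed.

Lemma sum_sig_neq (R : zmodType) (T : finType) (t : T) (F : T -> R) :
  \sum_(x : {x | x != t}) F (val x) = \sum_x F x - F t.
Proof. by rewrite -sum_sig [\sum_x F x](bigD1 t) //= addrAC subrr add0r. Qed.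

Lemma sum_natr_eq (R : pzSemiRingType) (T : finType) (t : T) :
  \sum_x ((t == x)%:R : R) = 1.
Proof.
rewrite (bigD1 t) //= eqxx big1 ?addr0 // => x /negbTE.
by rewrite eq_sym => ->.
Qed.

Definition sgnZ3 (b : bool) : 'Z_3 := if b then 1 else -1.

Lemma Z3_sum_sgnZ3 (z : 'Z_3) : exists s1 s2, z = sgnZ3 s1 + sgnZ3 s2.
Proof.
case: z => [[|[|[|//]]]] ?.
- by exists true, false; apply/val_inj.
- by exists false, false; apply/val_inj.
- by exists true, true; apply/val_inj.
Qed.

(* Two free signs already reach every residue mod 3; the others are set to +1. *)
Lemma exists_sgnZ3_sum (T : finType) (F : {set T}) (z : 'Z_3) :
  (2 <= #|F|)%N -> exists s : T -> bool, \sum_(e in F) sgnZ3 (s e) = z.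
Proof.
move=> F2.
have [f1 f1F] : exists f1, f1 \in F by apply/card_gt0P; lia.
have [f2 /setD1P[f21 f2F]] : exists f2, f2 \in F :\ f1.
  by apply/card_gt0P; move: (cardsD1 f1 F); rewrite f1F; lia.
pose R := \sum_(e | (e \in F) && (e != f1) && (e != f2)) sgnZ3 true.
have [s1 [s2 Hs]] := Z3_sum_sgnZ3 (z - R).
exists (fun e => if e == f1 then s1 else if e == f2 then s2 else true).
rewrite (bigD1 f1) // (bigD1 f2) /=; last by rewrite f2F f21.
rewrite eqxx (negbTE f21) eqxx addrA -Hs.
under eq_bigr => e /andP[/andP[_ /negbTE ->] /negbTE ->] do [].
by rewrite subrK.
Qed.

Section Flow.
Variables (V E : finType) (src tgt : E -> V).
Implicit Types (D : E -> bool) (e : E) (x : V).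

Definition flow D e x : 'Z_3 :=
  (otail src tgt D e == x)%:R - (Defs.ohead src tgt D e == x)%:R.

Lemma outdeg_sub_indeg D x :
  (outdeg src tgt D x)%:R - (indeg src tgt D x)%:R = \sum_e flow D e x.
Proof.
rewrite sumrB /outdeg /indeg -!sum1_card !natr_sum.
by congr (_ - _); rewrite big_mkcond; apply: eq_bigr => e _; rewrite inE; case: eqP.
Qed.

Lemma sum_flow D e : \sum_x flow D e x = 0.
Proof. by rewrite sumrB !sum_natr_eq subrr. Qed.

Lemma flow_avoiding D e x : otail src tgt D e != x -> Defs.ohead src tgt D e != x ->
  flow D e x = 0.
Proof. by rewrite /flow => /negbTE-> /negbTE->; rewrite subrr. Qed.

(* edges at [x] leave [x] exactly where [s] holds *)
Definition star x (s : E -> bool) e := s e == (src e == x).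

Lemma flow_star x s e : loopless src tgt -> (src e == x) || (tgt e == x) ->
  flow (star x s) e x = sgnZ3 (s e).
Proof.
move=> /(_ e) src_tgt; rewrite /flow /otail /Defs.ohead /star.
have [<- _|_ /= /eqP <-] := eqVneq (src e) x; case: (s e);
  by rewrite /= eqxx ?(eq_sym (tgt e)) (negbTE src_tgt) /= ?mulr1n ?mulr0n ?subr0 ?sub0r.
Qed.

End Flow.

Section Lift.
Variables (V E : finType) (src tgt : E -> V) (v a b : V) (ea eb : E).
Hypotheses (heab : ea != eb) (hea : joins src tgt ea v a)
  (heb : joins src tgt eb v b).

Local Notation avoids e := ((src e != v) && (tgt e != v)).

Definition incident e := (src e == v) || (tgt e == v).

Definition spare := [set e | (e != ea) && (e != eb) && incident e].

Lemma incident_joins e y : joins src tgt e v y -> incident e.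
Proof. by rewrite /incident; case/orP=> /andP[/eqP-> /eqP->]; rewrite eqxx ?orbT. Qed.

Lemma card_spare : (4 <= degree src tgt v)%N -> (2 <= #|spare|)%N.
Proof.
have -> : spare = [set e | incident e] :\ ea :\ eb.
  by apply/setP => e; rewrite !inE andbA [(e != eb) && _]andbC.
have := cardsD1 eb ([set e | incident e] :\ ea).
have := cardsD1 ea [set e | incident e].
rewrite !inE (incident_joins hea) (incident_joins heb) eq_sym heab /=.
change (degree src tgt v) with #|[set e | incident e]|; lia.
Qed.

Hypotheses (hav : a != v) (hbv : b != v).
Local Notation src' := (ssrc V E src tgt v a b hav hbv).
Local Notation tgt' := (stgt V E src tgt v a b hav hbv).

Variables (g : E -> bool) (D' : sE src tgt v -> bool).

(* The new arc of [D'] is split through [v] into [ea] and [eb], edges avoiding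
   [v] keep their orientation in [D'], the spare edges follow [g]. *)
Definition lift e : bool :=
  if e == ea then D' None == (src ea == a)
  else if e == eb then D' None == (tgt eb == b)
  else if (insub e : option {e | avoids e}) is Some u then D' (Some u) else g e.

Lemma ends_lift_ea : (otail src tgt lift ea, Defs.ohead src tgt lift ea) =
  if D' None then (a, v) else (v, a).
Proof.
rewrite /otail /Defs.ohead /lift eqxx.
case/orP: hea => /andP[/eqP-> /eqP->]; rewrite ?eqxx ?(eq_sym v a) ?(negbTE hav);
  by case: (D' None).
Qed.

Lemma ends_lift_eb : (otail src tgt lift eb, Defs.ohead src tgt lift eb) =
  if D' None then (v, b) else (b, v).
Proof.
rewrite /otail /Defs.ohead /lift eq_sym (negbTE heab) eqxx.
case/orP: heb => /andP[/eqP-> /eqP->]; rewrite ?eqxx ?(eq_sym v b) ?(negbTE hbv);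
  by case: (D' None).
Qed.

Lemma lift_spare e : e \in spare -> lift e = g e.
Proof.
rewrite inE /lift => /andP[/andP[/negbTE-> /negbTE->] inc_e].
by rewrite insubN // negb_and !negbK.
Qed.

Lemma lift_val (u : {e | avoids e}) : lift (val u) = D' (Some u).
Proof.
have [src_u tgt_u] := andP (valP u).
have not_incident e : incident e -> val u != e.
  by apply: contraTneq => <-; rewrite /incident (negbTE src_u) (negbTE tgt_u).
rewrite /lift (negbTE (not_incident _ (incident_joins hea))).
by rewrite (negbTE (not_incident _ (incident_joins heb))) valK.
Qed.

Lemma val_otail_lift u :
  val (otail src' tgt' D' (Some u)) = otail src tgt lift (val u).
Proof.
rewrite /otail lift_val /=; have [src_u tgt_u] := andP (valP u).
by case: (D' (Some u)); rewrite val_insubd ?src_u ?tgt_u.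
Qed.

Lemma val_ohead_lift u :
  val (Defs.ohead src' tgt' D' (Some u)) = Defs.ohead src tgt lift (val u).
Proof.
rewrite /Defs.ohead lift_val /=; have [src_u tgt_u] := andP (valP u).
by case: (D' (Some u)); rewrite val_insubd ?src_u ?tgt_u.
Qed.

Lemma lift_arcs_new_edge :
  Defs.arc src tgt lift (val (otail src' tgt' D' None)) v &&
  Defs.arc src tgt lift v (val (Defs.ohead src' tgt' D' None)).
Proof.
rewrite /otail /Defs.ohead.
case: (D' None) ends_lift_ea ends_lift_eb => -[tl_a hd_a] [tl_b hd_b] /=.
  by apply/andP; split; apply/existsP; [exists ea | exists eb];
    rewrite ?tl_a ?hd_a ?tl_b ?hd_b !eqxx.
by apply/andP; split; apply/existsP; [exists eb | exists ea];
  rewrite ?tl_a ?hd_a ?tl_b ?hd_b !eqxx.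
Qed.

Lemma connect_lift x' y' : connect (Defs.arc src' tgt' D') x' y' ->
  connect (Defs.arc src tgt lift) (val x') (val y').
Proof.
have arc_lift z' w' : Defs.arc src' tgt' D' z' w' ->
    connect (Defs.arc src tgt lift) (val z') (val w').
  case/existsP => -[u|] /andP[/eqP<- /eqP<-].
    apply: connect1; apply/existsP; exists (val u).
    by rewrite val_otail_lift val_ohead_lift !eqxx.
  by case/andP: lift_arcs_new_edge => /connect1 tl_v /connect1; apply: connect_trans.
case/connectP=> p + ->; elim: p x' => [|z' p IH] x' /=; first by rewrite connect0.
by case/andP=> /arc_lift x_z /IH; apply: connect_trans.
Qed.

(* Every vertex reaches [v] and is reached from it, through the split new edge. *)
Lemma lift_strongly_connected : strongly_connected src' tgt' D' ->
  strongly_connected src tgt lift.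
Proof.
move=> scD' x y; have [tl_v v_hd] := andP lift_arcs_new_edge.
have to_v : connect (Defs.arc src tgt lift) x v.
  have [->|x_v] := eqVneq x v; first exact: connect0.
  apply: connect_trans (connect1 tl_v).
  exact: (connect_lift (scD' (exist _ x x_v) _)).
have from_v : connect (Defs.arc src tgt lift) v y.
  have [->|y_v] := eqVneq y v; first exact: connect0.
  apply: connect_trans (connect1 v_hd) _.
  exact: (connect_lift (scD' _ (exist _ y y_v))).
exact: connect_trans to_v from_v.
Qed.

Lemma flow_lift_new_edge x : flow src tgt lift ea x + flow src tgt lift eb x =
  (val (otail src' tgt' D' None) == x)%:R -
  (val (Defs.ohead src' tgt' D' None) == x)%:R.
Proof.
rewrite /flow [otail src' _ _ _]/otail [Defs.ohead src' _ _ _]/Defs.ohead.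
by case: (D' None) ends_lift_ea ends_lift_eb => -[-> ->] [-> ->] /=; ring.
Qed.

Lemma sum_flow_lift y : \sum_e flow src tgt lift e y =
  flow src tgt lift ea y + flow src tgt lift eb y +
  \sum_(e in spare) flow src tgt g e y + \sum_(e | avoids e) flow src tgt lift e y.
Proof.
rewrite (bigD1 ea) // (bigD1 eb); last by rewrite eq_sym.
rewrite (bigID incident) /= !addrA; congr (_ + _ + _).
  apply: eq_big => [e|e spare_e]; first by rewrite inE.
  by rewrite /flow /otail /Defs.ohead lift_spare // inE.
apply: eq_bigl => e; rewrite /incident negb_or andbC.
case: (boolP (avoids e)) => //= avoid_e.
by apply/andP; split; apply: contraTneq avoid_e => ->;
  rewrite -negb_or negbK; [exact: incident_joins hea | exact: incident_joins heb].
Qed.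

Lemma sum_flow_lift_center :
  \sum_e flow src tgt lift e v = \sum_(e in spare) flow src tgt g e v.
Proof.
have tl_v := valP (otail src' tgt' D' None).
have hd_v := valP (Defs.ohead src' tgt' D' None).
rewrite sum_flow_lift flow_lift_new_edge (negbTE tl_v) (negbTE hd_v) subrr add0r.
rewrite [\sum_(e | avoids e) _]big1 ?addr0 // => e /andP[src_e tgt_e].
by apply: flow_avoiding; rewrite /otail /Defs.ohead; case: (lift e).
Qed.

Lemma sum_flow_lift_val x' : \sum_e flow src tgt lift e (val x') =
  \sum_(e in spare) flow src tgt g e (val x') + \sum_e' flow src' tgt' D' e' x'.
Proof.
rewrite sum_flow_lift flow_lift_new_edge sum_option [LHS]addrAC [LHS]addrC.
congr (_ + (_ + _)).
rewrite [LHS]sum_sig; apply: eq_bigr => u _.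
by rewrite /flow -val_otail_lift -val_ohead_lift !val_eqE.
Qed.

End Lift.

Local Close Scope ring_scope.
Theorem mainTheorem9 (V E : finType) (src tgt : E -> V)
  (hloop : loopless src tgt) (v a b : V) (ea eb : E)
  (hdeg : 4 <= degree src tgt v) (hab : a != b) (heab : ea != eb)
  (hea : joins src tgt ea v a) (heb : joins src tgt eb v b)
  (hav : a != v) (hbv : b != v) :
  S3 (ssrc V E src tgt v a b hav hbv) (stgt V E src tgt v a b hav hbv) ->
  S3 src tgt.
Proof.
Local Open Scope ring_scope.
move=> S3' beta sum_beta.
have [s sum_s] := exists_sgnZ3_sum (beta v) (card_spare heab hea heb hdeg).
pose g := star src v s.
pose charge x := \sum_(e in spare src tgt v ea eb) flow src tgt g e x.
have charge_v : charge v = beta v.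
  rewrite -sum_s; apply: eq_bigr => e; rewrite inE => /andP[_ incident_e].
  exact: flow_star.
have sum_charge : \sum_x charge x = 0.
  by rewrite exchange_big big1 // => e _; apply: sum_flow.
have [|D' [scD' degD']] := S3' (fun x' => beta (val x') - charge (val x')).
  by rewrite sumrB !sum_sig_neq sum_beta sum_charge charge_v subrr.
exists (lift a b ea eb g D'); split; first exact: lift_strongly_connected.
move=> x; rewrite outdeg_sub_indeg.
have [->|x_v] := eqVneq x v; first by rewrite sum_flow_lift_center.
rewrite -[x]/(val (exist _ x x_v : sV v)) sum_flow_lift_val // -outdeg_sub_indeg.
by rewrite degD' addrC subrK.
Qed.
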